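(* Let $G$ be a finite group and let $A$ be a group acting on $G$ by automorphisms, and assume $G$ has an $A$-equivariant IYB-structure. Let $n\ge 1$ and $G^{(n)} = G\times\cdots\times G$ ($n$ factors). Let the wreath product $A\wr \Sigma_n = A^n \rtimes \Sigma_n$ ($\Sigma_n$ the symmetric group on $n$ points) act on $G^{(n)}$ by letting $(a_1,\ldots,a_n)\cdot\sigma$ send $(g_1,\ldots,g_n)$ to $({}^{a_1}g_{\sigma^{-1}(1)},\ldots,{}^{a_n}g_{\sigma^{-1}(n)})$. Then $G^{(n)}$ has an $A\wr\Sigma_n$-equivariant IYB-structure.
   Context: For a group $G$ and a left $\mathbb Z G$-module $M$, a $1$-cocycle is a map $\chi: G \to M$ with $\chi(gh) = \chi(g) + g\chi(h)$ for all $g,h\in G$. A finite group $G$ is called Involutive Yang-Baxter (IYB) if there is a left $\mathbb Z G$-module $M$ and a bijective $1$-cocycle $\chi: G\to M$. If a group $A$ acts on $G$ from the left by automorphisms (written $g\mapsto {}^a g$), an $A$-equivariant IYB-structure on $G$ is a pair $(M,\chi)$ where $M$ is a left $\mathbb Z[G\rtimes A]$-module and $\chi: G\to M$ (with $M$ regarded as a $G$-module by restriction) is a bijective $1$-cocycle satisfying $\chi({}^a g) = a\chi(g)$ for all $a\in A$, $g\in G$. *)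

From HB Require Import structures.
From mathcomp Require Import all_boot all_order all_algebra all_fingroup.

Set Implicit Arguments.
Unset Strict Implicit.
Unset Printing Implicit Defensive.

Import GRing.Theory.

Definition is_aut_action (G A : groupType) (act : A -> G -> G) : Prop :=
  [/\ (forall a (x y : G), act a (x * y)%g = (act a x * act a y)%g),
      (forall x : G, act 1%g x = x) &
      (forall (a b : A) (x : G), act (a * b)%g x = act a (act b x))].

Definition is_module_action (H : groupType) (M : zmodType)
    (rho : H -> M -> M) : Prop :=
  [/\ (forall h (m1 m2 : M), rho h (m1 + m2)%R = (rho h m1 + rho h m2)%R),
      (forall m : M, rho 1%g m = m) &
      (forall (h k : H) (m : M), rho (h * k)%g m = rho h (rho k m))].

Definition is_cocycle (G : groupType) (M : zmodType) (rhoG : G -> M -> M)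
    (chi : G -> M) : Prop :=
  forall g h : G, chi (g * h)%g = (chi g + rhoG g (chi h))%R.

(* A left Z[G x| A]-module is encoded (equivalently) as an abelian group M
   with a Z G-module structure [rhoG] and a Z A-module structure [rhoA]
   satisfying the semidirect-product relation
       rhoA a (rhoG g m) = rhoG (act a g) (rhoA a m),
   i.e. (1,a)(g,1) = (^a g, a) in G x| A; the G-module structure of M by
   restriction is [rhoG] and the action of a \in A is [rhoA a]. *)
Definition has_equiv_IYB (G A : groupType) (act : A -> G -> G) : Prop :=
  exists (M : zmodType) (rhoG : G -> M -> M) (rhoA : A -> M -> M)
         (chi : G -> M),
    [/\ is_module_action rhoG /\ is_module_action rhoA,
        (forall (a : A) (g : G) (m : M),
            rhoA a (rhoG g m) = rhoG (act a g) (rhoA a m)),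
        is_cocycle rhoG chi,
        bijective chi &
        (forall (a : A) (g : G), chi (act a g) = rhoA a (chi g))].

(* The permutation component is multiplied as composition of maps
   (s o t), which in MathComp's convention for {perm _} is (t * s)%g.
   The product is
      (a, s) (b, t) = (i |-> a_i * b_{s^-1 i},  s o t),
   which is exactly the group law making
      (a, s) . (g_1..g_n) = (^{a_1} g_{s^-1 1}, ..., ^{a_n} g_{s^-1 n})
   a left action (see [wreath_act]). *)

Definition wreath (A : groupType) (n : nat) :=
  ({ffun 'I_n -> A} * {perm 'I_n})%type.

Section Wreath.
Variables (A : groupType) (n : nat).
Local Notation W := (wreath A n).

HB.instance Definition _ := Choice.on W.

Definition wr_one : W := ([ffun => 1%g], 1%g).
Definition wr_mul (x y : W) : W :=
  ([ffun i => (x.1 i * y.1 ((x.2)^-1 i))%g], (y.2 * x.2)%g).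
Definition wr_inv (x : W) : W :=
  ([ffun i => (x.1 (x.2 i))^-1%g], (x.2)^-1%g).

Lemma wr_mulA : associative wr_mul.
Proof.
move=> [a s] [b t] [c u]; rewrite /wr_mul /=; congr (_, _).
  by apply/ffunP=> i; rewrite !ffunE mulgA invMg permM.
by rewrite mulgA.
Qed.

Lemma wr_mul1 : left_id wr_one wr_mul.
Proof.
move=> [a s]; rewrite /wr_mul /=; congr (_, _); last by rewrite mulg1.
by apply/ffunP=> i; rewrite !ffunE mul1g invg1 perm1.
Qed.

Lemma wr_mulg1 : right_id wr_one wr_mul.
Proof.
move=> [a s]; rewrite /wr_mul /=; congr (_, _); last by rewrite mul1g.
by apply/ffunP=> i; rewrite !ffunE mulg1.
Qed.

Lemma wr_mulV : left_inverse wr_one wr_inv wr_mul.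
Proof.
move=> [a s]; rewrite /wr_mul /wr_one /=; congr (_, _); last by rewrite mulgV.
by apply/ffunP=> i; rewrite !ffunE invgK mulVg.
Qed.

Lemma wr_mulgV : right_inverse wr_one wr_inv wr_mul.
Proof.
move=> [a s]; rewrite /wr_mul /wr_one /=; congr (_, _); last by rewrite mulVg.
by apply/ffunP=> i; rewrite !ffunE permKV mulgV.
Qed.

HB.instance Definition _ :=
  isGroup.Build W wr_mulA wr_mul1 wr_mulg1 wr_mulV wr_mulgV.

End Wreath.

Definition wreath_act (G A : groupType) (act : A -> G -> G) (n : nat)
    (w : wreath A n) (g : {ffun 'I_n -> G}) : {ffun 'I_n -> G} :=
  [ffun i => act (w.1 i) (g ((w.2)^-1%g i))].

From HB Require Import structures.
From mathcomp Require Import all_boot all_order all_algebra all_fingroup.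

Set Implicit Arguments.
Unset Strict Implicit.
Unset Printing Implicit Defensive.

(* The IYB-structure on G^(n) is the n-th power of the one on G: the module
   is M^n, the group G^n acts coordinatewise, and A wr Sigma_n acts on M^n by
   the same formula as on G^n, i.e. by permuting coordinates and applying the
   A-action of M in each coordinate. The cocycle is chi applied coordinatewise;
   every axiom is then checked one coordinate at a time, so neither the
   automorphism property of [act] nor [0 < n] is needed. *)

Section PowerModule.
Variables (H : groupType) (M : zmodType) (rho : H -> M -> M) (n : nat).

Definition ffun_rho (h : {ffun 'I_n -> H}) (m : {ffun 'I_n -> M}) :
    {ffun 'I_n -> M} :=
  [ffun i => rho (h i) (m i)].

Definition wreath_rho (w : wreath H n) (m : {ffun 'I_n -> M}) :
    {ffun 'I_n -> M} :=
  [ffun i => rho (w.1 i) (m ((w.2)^-1%g i))].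

Hypothesis rho_module : is_module_action rho.

Lemma ffun_rho_module : is_module_action ffun_rho.
Proof.
case: rho_module => rhoD rho1 rhoM.
by split=> *; apply/ffunP=> i; rewrite !ffunE ?rhoD ?rho1 ?rhoM.
Qed.

Lemma wreath_rho_module : is_module_action wreath_rho.
Proof.
case: rho_module => rhoD rho1 rhoM; split.
- by move=> w m1 m2; apply/ffunP=> i; rewrite !ffunE rhoD.
- by move=> m; apply/ffunP=> i; rewrite !ffunE /= invg1 perm1 rho1.
- move=> [a s] [b t] m; apply/ffunP=> i.
  by rewrite !ffunE /= rhoM invMg permM.
Qed.

End PowerModule.

Arguments ffun_rho {H M} rho {n}.
Arguments wreath_rho {H M} rho {n}.

Section PowerIYB.
Variables (G A : groupType) (act : A -> G -> G).
Variables (M : zmodType) (rhoG : G -> M -> M) (rhoA : A -> M -> M).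
Variables (chi : G -> M) (n : nat).

Definition ffun_chi (g : {ffun 'I_n -> G}) : {ffun 'I_n -> M} :=
  [ffun i => chi (g i)].

Lemma wreath_rho_semidirect :
    (forall a g m, rhoA a (rhoG g m) = rhoG (act a g) (rhoA a m)) ->
  forall (w : wreath A n) g m,
    wreath_rho rhoA w (ffun_rho rhoG g m) =
    ffun_rho rhoG (wreath_act act w g) (wreath_rho rhoA w m).
Proof. by move=> rhoAG w g m; apply/ffunP=> i; rewrite !ffunE rhoAG. Qed.

Lemma ffun_chi_cocycle :
  is_cocycle rhoG chi -> is_cocycle (ffun_rho rhoG) ffun_chi.
Proof. by move=> chiM g h; apply/ffunP=> i; rewrite !ffunE chiM. Qed.

Lemma ffun_chi_bij : bijective chi -> bijective ffun_chi.
Proof.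
case=> chi' chiK chi'K.
exists (fun m : {ffun 'I_n -> M} => [ffun i => chi' (m i)] : {ffun 'I_n -> G}).
  by move=> g; apply/ffunP=> i; rewrite !ffunE chiK.
by move=> m; apply/ffunP=> i; rewrite !ffunE chi'K.
Qed.

Lemma ffun_chi_equivariant :
    (forall a g, chi (act a g) = rhoA a (chi g)) ->
  forall (w : wreath A n) g,
    ffun_chi (wreath_act act w g) = wreath_rho rhoA w (ffun_chi g).
Proof. by move=> chiA w g; apply/ffunP=> i; rewrite !ffunE chiA. Qed.

End PowerIYB.

Arguments ffun_chi {G M} chi {n}.

Theorem mainTheorem3 (G : finGroupType) (A : groupType) (act : A -> G -> G) :
  is_aut_action act ->
  has_equiv_IYB act ->
  forall n : nat, 0 < n ->
  has_equiv_IYB (@wreath_act G A act n).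
Proof.
move=> _ [M [rhoG [rhoA [chi [[rhoG_mod rhoA_mod] rhoAG chiM chi_bij chiA]]]]].
move=> n _.
exists {ffun 'I_n -> M}, (ffun_rho rhoG), (wreath_rho rhoA), (ffun_chi chi).
split.
- by split; [exact: ffun_rho_module | exact: wreath_rho_module].
- exact: wreath_rho_semidirect.
- exact: ffun_chi_cocycle.
- exact: ffun_chi_bij.
- exact: ffun_chi_equivariant.
Qed.
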